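(* Let $l$ and $r$ be positive integers with $l\geq 2r$, and let $f$ be a real function on the nonnegative integers with $f(n)=a_ln^l+a_{l-1}n^{l-1}+\cdots+a_{l-2r}n^{l-2r}+o(n^{l-2r})$ as $n\to\infty$, where $a_l,\ldots,a_{l-2r}$ are real constants and $a_l\neq 0$. Then for every $1\leq j\leq r$ there are real numbers $z_{3,j},\ldots,z_{2(r-j+1),j}$ such that $$\left(\mathcal R^2\widehat{\mathcal L}^{j-1}f\right)(n)=1+\frac{2^j-2^{j-1}l-2}{n^2}+\sum_{i=3}^{2(r-j+1)}\frac{z_{i,j}}{n^i}+o\!\left(\frac{1}{n^{2(r-j+1)}}\right)\quad(n\to\infty).$$
   Context: For a real function (sequence) $g$ on the nonnegative integers, $(\widehat{\mathcal L}g)(n)=g(n+1)^2-g(n)g(n+2)$, $\widehat{\mathcal L}^0 g=g$ and $\widehat{\mathcal L}^jg=\widehat{\mathcal L}(\widehat{\mathcal L}^{j-1}g)$; and $(\mathcal R^2g)(n)=\frac{g(n)g(n+2)}{g(n+1)^2}$ (defined for $n$ large enough that $g(n+1)\ne0$). *)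

From Stdlib Require Import Reals List Arith.
Import ListNotations.
Open Scope R_scope.

(* sum_range m n F = F m + F (m+1) + ... + F n  (empty if n < m) *)
Definition sum_range (m n : nat) (F : nat -> R) : R :=
  fold_right Rplus 0 (map F (seq m (S n - m))).

Definition Lhat (g : nat -> R) : nat -> R :=
  fun n => g (S n) ^ 2 - g n * g (S (S n)).

Definition Lhat_iter (j : nat) (g : nat -> R) : nat -> R :=
  Nat.iter j Lhat g.

(* (R^2 g)(n) = g(n) g(n+2) / g(n+1)^2  (total division; only large n matter) *)
Definition R2 (g : nat -> R) : nat -> R :=
  fun n => g n * g (S (S n)) / g (S n) ^ 2.

Definition little_o_pow (e : nat -> R) (m : nat) : Prop :=
  forall eps : R, 0 < eps -> exists N : nat, forall n : nat, (N <= n)%nat ->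
    Rabs (e n) <= eps * INR n ^ m.

Definition little_o_invpow (e : nat -> R) (m : nat) : Prop :=
  forall eps : R, 0 < eps -> exists N : nat, forall n : nat, (N <= n)%nat ->
    Rabs (e n) * INR n ^ m <= eps.

(* Write f = p_0 + e_0 with p_0 = a_(l-2r) X^(l-2r) + ... + a_l X^l and
   e_0 = o(n^(l-2r)).  Lhat acts on polynomials as
   Lpoly p = p(X+1)^2 - p(X) p(X+2), which sends a polynomial of exact degree
   d >= 2 to one of exact degree 2d - 2 (top coefficient d p_d^2).  If g = p + e
   with deg p = d and e = o(n^k), k <= d, then Lhat g = Lpoly p + o(n^(d+k)).
   By induction, Lhat^i f = p_i + o(n^(k_i)) with deg p_i = d_i
   = 2^i l - 2^(i+1) + 2 and d_i - k_i = 2(r - i).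
   For such a g with m = d - k >= 2, write B(x) = p(x+1)^2, so that
   p(x) p(x+2) = B(x) - Lpoly p(x).  Then (R^2 g)(n) differs from
   (B - Lpoly p)/B (n) by o(1/n^m), and long division of Lpoly p by B in powers
   of 1/x (exact, with a polynomial remainder of degree < 2d) expands the latter
   as 1 - d/n^2 + sum_(i=3..m) z_i/n^i + O(1/n^(m+1)).  With d = d_(j-1) and
   m = 2(r - j + 1) this is the theorem, since -d_(j-1) = 2^j - 2^(j-1) l - 2. *)

From Stdlib Require Import Reals List Lia Lra.
From mathcomp Require all_boot all_order all_algebra ring lra zify.
From mathcomp Require Import Rstruct.

Open Scope R_scope.

Definition bigO (u : nat -> R) (k : nat) : Prop :=
  exists K N, 0 <= K /\ forall n, (N <= n)%nat -> Rabs (u n) <= K * INR n ^ k.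

Definition bounded_below (u : nat -> R) (k : nat) : Prop :=
  exists c N, 0 < c /\ forall n, (N <= n)%nat -> c * INR n ^ k <= Rabs (u n).

Lemma exists_nat_ge (A : R) : exists N : nat, A <= INR N.
Proof. destruct (INR_archimed 1 A) as [n Hn]; [lra | exists n; lra]. Qed.

Lemma INR_ge1 n : (1 <= n)%nat -> 1 <= INR n.
Proof. intros Hn. apply (le_INR 1 n) in Hn. exact Hn. Qed.

Lemma pow_INR_mono n a b : (1 <= n)%nat -> (a <= b)%nat -> INR n ^ a <= INR n ^ b.
Proof. intros Hn Hab. apply Rle_pow; [apply INR_ge1|]; assumption. Qed.

Lemma pow_INR_succ n k : (1 <= n)%nat -> INR (S n) ^ k <= 2 ^ k * INR n ^ k.
Proof.
intros Hn. rewrite <- Rpow_mult_distr. apply pow_incr.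
pose proof (INR_ge1 n Hn). rewrite S_INR. lra.
Qed.

Lemma lo_ext e1 e2 k : (forall n, e1 n = e2 n) -> little_o_pow e1 k -> little_o_pow e2 k.
Proof.
intros He H eps Heps. destruct (H eps Heps) as [N HN].
exists N. intros n Hn. rewrite <- He. auto.
Qed.

Lemma lo_add e1 e2 k :
  little_o_pow e1 k -> little_o_pow e2 k -> little_o_pow (fun n => e1 n + e2 n) k.
Proof.
intros H1 H2 eps Heps.
destruct (H1 (eps / 2)) as [N1 HN1]; [lra|]. destruct (H2 (eps / 2)) as [N2 HN2]; [lra|].
exists (Nat.max N1 N2). intros n Hn.
specialize (HN1 n ltac:(lia)). specialize (HN2 n ltac:(lia)).
eapply Rle_trans; [apply Rabs_triang | lra].
Qed.

Lemma lo_opp e k : little_o_pow e k -> little_o_pow (fun n => - e n) k.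
Proof.
intros H eps Heps. destruct (H eps Heps) as [N HN].
exists N. intros n Hn. rewrite Rabs_Ropp. auto.
Qed.

Lemma lo_mono e a b : (a <= b)%nat -> little_o_pow e a -> little_o_pow e b.
Proof.
intros Hab H eps Heps. destruct (H eps Heps) as [N HN].
exists (Nat.max N 1). intros n Hn.
eapply Rle_trans; [apply HN; lia|].
apply Rmult_le_compat_l; [lra | apply pow_INR_mono; lia].
Qed.

Lemma bigO_mono u a b : (a <= b)%nat -> bigO u a -> bigO u b.
Proof.
intros Hab [K [N [HK H]]]. exists K, (Nat.max N 1). split; [exact HK|]. intros n Hn.
eapply Rle_trans; [apply H; lia|].
apply Rmult_le_compat_l; [exact HK | apply pow_INR_mono; lia].
Qed.

Lemma lo_bigO e k : little_o_pow e k -> bigO e k.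
Proof. intros H. destruct (H 1) as [N HN]; [lra|]. exists 1, N. split; [lra | exact HN]. Qed.

Lemma bigO_lo_succ u k : bigO u k -> little_o_pow u (S k).
Proof.
intros [K [N0 [HK H]]] eps Heps. destruct (exists_nat_ge (K / eps)) as [N1 HN1].
exists (Nat.max N0 (Nat.max N1 1)). intros n Hn.
specialize (H n ltac:(lia)).
assert (HnN : INR N1 <= INR n) by (apply le_INR; lia).
assert (Hpow : 0 <= INR n ^ k) by (apply pow_le, pos_INR).
assert (HKn : K <= eps * INR n).
{ apply (Rmult_le_reg_r (/ eps)); [apply Rinv_0_lt_compat; lra|].
  replace (eps * INR n * / eps) with (INR n) by (field; lra). unfold Rdiv in HN1. lra. }
simpl. eapply Rle_trans; [exact H|].
replace (eps * (INR n * INR n ^ k)) with ((eps * INR n) * INR n ^ k) by ring.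
apply Rmult_le_compat_r; assumption.
Qed.

Lemma lo_mul e u a b :
  little_o_pow e a -> bigO u b -> little_o_pow (fun n => u n * e n) (b + a).
Proof.
intros He [K [N0 [HK Hu]]] eps Heps.
assert (Hd : 0 < eps / (K + 1)) by (apply Rdiv_lt_0_compat; lra).
destruct (He _ Hd) as [N1 HN1].
exists (Nat.max N0 N1). intros n Hn.
specialize (Hu n ltac:(lia)). specialize (HN1 n ltac:(lia)).
rewrite Rabs_mult, pow_add.
pose proof (Rabs_pos (u n)). pose proof (Rabs_pos (e n)).
assert (0 <= INR n ^ a) by apply pow_le, pos_INR.
assert (0 <= INR n ^ b) by apply pow_le, pos_INR.
assert (HKe : K * (eps / (K + 1)) <= eps).
{ apply (Rmult_le_reg_r (K + 1)); [lra|]. field_simplify; [nra | lra]. }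
apply Rle_trans with ((K * INR n ^ b) * (eps / (K + 1) * INR n ^ a)).
- apply Rmult_le_compat; assumption.
- replace ((K * INR n ^ b) * (eps / (K + 1) * INR n ^ a))
    with ((K * (eps / (K + 1))) * (INR n ^ b * INR n ^ a)) by ring.
  apply Rmult_le_compat_r; [apply Rmult_le_pos|]; assumption.
Qed.

Lemma bigO_mul u v a b : bigO u a -> bigO v b -> bigO (fun n => u n * v n) (a + b).
Proof.
intros [K1 [N1 [HK1 H1]]] [K2 [N2 [HK2 H2]]].
exists (K1 * K2), (Nat.max N1 N2). split; [nra|]. intros n Hn.
specialize (H1 n ltac:(lia)). specialize (H2 n ltac:(lia)).
rewrite Rabs_mult, pow_add.
replace (K1 * K2 * (INR n ^ a * INR n ^ b)) with ((K1 * INR n ^ a) * (K2 * INR n ^ b)) by ring.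
apply Rmult_le_compat; auto using Rabs_pos.
Qed.

Lemma lo_shift e k : little_o_pow e k -> little_o_pow (fun n => e (S n)) k.
Proof.
intros H eps Heps.
assert (H2k : 0 < 2 ^ k) by (apply pow_lt; lra).
destruct (H (eps / 2 ^ k)) as [N HN]; [apply Rdiv_lt_0_compat; lra|].
exists (Nat.max N 1). intros n Hn.
eapply Rle_trans; [apply HN; lia|].
apply Rle_trans with (eps / 2 ^ k * (2 ^ k * INR n ^ k)).
- apply Rmult_le_compat_l; [apply Rlt_le, Rdiv_lt_0_compat; lra|].
  apply pow_INR_succ; lia.
- right. field. lra.
Qed.

Lemma bigO_shift u k : bigO u k -> bigO (fun n => u (S n)) k.
Proof.
intros [K [N [HK H]]]. exists (K * 2 ^ k), (Nat.max N 1).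
split; [apply Rmult_le_pos; [exact HK | apply pow_le; lra]|]. intros n Hn.
eapply Rle_trans; [apply H; lia|].
rewrite Rmult_assoc. apply Rmult_le_compat_l; [exact HK | apply pow_INR_succ; lia].
Qed.

Lemma loi_add e1 e2 m :
  little_o_invpow e1 m -> little_o_invpow e2 m -> little_o_invpow (fun n => e1 n + e2 n) m.
Proof.
intros H1 H2 eps Heps.
destruct (H1 (eps / 2)) as [N1 HN1]; [lra|]. destruct (H2 (eps / 2)) as [N2 HN2]; [lra|].
exists (Nat.max N1 N2). intros n Hn.
specialize (HN1 n ltac:(lia)). specialize (HN2 n ltac:(lia)).
assert (0 <= INR n ^ m) by apply pow_le, pos_INR.
apply Rle_trans with ((Rabs (e1 n) + Rabs (e2 n)) * INR n ^ m); [|lra].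
apply Rmult_le_compat_r; [assumption | apply Rabs_triang].
Qed.

Lemma loi_eventually_ext e1 e2 m N0 :
  little_o_invpow e2 m -> (forall n, (N0 <= n)%nat -> e1 n = e2 n) -> little_o_invpow e1 m.
Proof.
intros H He eps Heps. destruct (H eps Heps) as [N HN].
exists (Nat.max N N0). intros n Hn. rewrite He by lia. apply HN; lia.
Qed.

Lemma bounded_below_nonzero u k : bounded_below u k -> exists N, forall n, (N <= n)%nat -> u n <> 0.
Proof.
intros [c [N [Hc H]]]. exists (Nat.max N 1). intros n Hn Hu.
specialize (H n ltac:(lia)). rewrite Hu, Rabs_R0 in H.
assert (0 < INR n ^ k) by (apply pow_lt; pose proof (INR_ge1 n ltac:(lia)); lra).
nra.
Qed.

Lemma bounded_below_pow k : bounded_below (fun n => INR n ^ k) k.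
Proof.
exists 1, 0%nat. split; [lra|]. intros n _.
rewrite Rabs_pos_eq by (apply pow_le, pos_INR). lra.
Qed.

Lemma bounded_below_mul u v a b :
  bounded_below u a -> bounded_below v b -> bounded_below (fun n => u n * v n) (a + b).
Proof.
intros [c1 [N1 [Hc1 H1]]] [c2 [N2 [Hc2 H2]]].
exists (c1 * c2), (Nat.max N1 N2). split; [nra|]. intros n Hn.
specialize (H1 n ltac:(lia)). specialize (H2 n ltac:(lia)).
assert (0 <= INR n ^ a) by apply pow_le, pos_INR.
assert (0 <= INR n ^ b) by apply pow_le, pos_INR.
rewrite Rabs_mult, pow_add.
replace (c1 * c2 * (INR n ^ a * INR n ^ b)) with ((c1 * INR n ^ a) * (c2 * INR n ^ b)) by ring.
apply Rmult_le_compat; try assumption; apply Rmult_le_pos; lra.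
Qed.

Lemma bounded_below_perturb u e k :
  bounded_below u k -> little_o_pow e k -> bounded_below (fun n => u n + e n) k.
Proof.
intros [c [N0 [Hc H]]] He. destruct (He (c / 2)) as [N1 HN1]; [lra|].
exists (c / 2), (Nat.max N0 N1). split; [lra|]. intros n Hn.
specialize (H n ltac:(lia)). specialize (HN1 n ltac:(lia)).
pose proof (Rabs_triang (u n + e n) (- e n)) as Ht.
replace (u n + e n + - e n) with (u n) in Ht by ring. rewrite Rabs_Ropp in Ht. lra.
Qed.

Lemma lo_div_bounded_below num den q m :
  little_o_pow num q -> bounded_below den (q + m) ->
  little_o_invpow (fun n => num n / den n) m.
Proof.
intros Hnum [c [N0 [Hc Hden]]] eps Heps.
destruct (Hnum (eps * c)) as [N1 HN1]; [nra|].
exists (Nat.max N0 (Nat.max N1 1)). intros n Hn.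
specialize (Hden n ltac:(lia)). specialize (HN1 n ltac:(lia)).
assert (Hq : 0 < INR n ^ q) by (apply pow_lt; pose proof (INR_ge1 n ltac:(lia)); lra).
assert (Hm : 0 < INR n ^ m) by (apply pow_lt; pose proof (INR_ge1 n ltac:(lia)); lra).
rewrite pow_add in Hden.
assert (Hd : 0 < Rabs (den n)).
{ assert (0 < c * (INR n ^ q * INR n ^ m)) by (apply Rmult_lt_0_compat; [lra | nra]). lra. }
unfold Rdiv. rewrite Rabs_mult, Rabs_inv.
apply (Rmult_le_reg_r (Rabs (den n))); [exact Hd|].
replace (Rabs (num n) * / Rabs (den n) * INR n ^ m * Rabs (den n))
  with (Rabs (num n) * INR n ^ m) by (field; lra).
apply Rle_trans with (eps * c * INR n ^ q * INR n ^ m).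
- apply Rmult_le_compat_r; lra.
- replace (eps * c * INR n ^ q * INR n ^ m) with (eps * (c * (INR n ^ q * INR n ^ m))) by ring.
  apply Rmult_le_compat_l; lra.
Qed.

Lemma product_perturbation u0 eu v0 ev d k : (k <= d)%nat ->
  bigO u0 d -> bigO v0 d -> little_o_pow eu k -> little_o_pow ev k ->
  little_o_pow (fun n => (u0 n + eu n) * (v0 n + ev n) - u0 n * v0 n) (d + k).
Proof.
intros Hkd Hu Hv Heu Hev.
assert (Oeu : bigO eu d) by (apply (bigO_mono _ k); [exact Hkd | apply lo_bigO, Heu]).
pose proof (lo_mul _ _ _ _ Hev Hu) as T1.
pose proof (lo_mul _ _ _ _ Heu Hv) as T2.
pose proof (lo_mul _ _ _ _ Hev Oeu) as T3.
eapply lo_ext; [|apply lo_add; [apply lo_add; [exact T1 | exact T2] | exact T3]].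
intros n. cbv beta. ring.
Qed.

Lemma ratio_perturbation A B E1 E2 s m : (m <= s)%nat ->
  bigO A s -> bigO B s -> bounded_below B s ->
  little_o_pow E1 (s - m) -> little_o_pow E2 (s - m) ->
  little_o_invpow (fun n => (A n + E1 n) / (B n + E2 n) - A n / B n) m.
Proof.
intros Hms HA HB HBlow HE1 HE2.
assert (Hnum : little_o_pow (fun n => E1 n * B n - A n * E2 n) (s + (s - m))).
{ eapply lo_ext;
    [|exact (lo_add _ _ _ (lo_mul _ _ _ _ HE1 HB) (lo_opp _ _ (lo_mul _ _ _ _ HE2 HA)))].
  intros n. cbv beta. ring. }
assert (Hden : bounded_below (fun n => (B n + E2 n) * B n) (s + (s - m) + m)).
{ replace (s + (s - m) + m)%nat with (s + s)%nat by lia.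
  apply bounded_below_mul; [|exact HBlow].
  apply bounded_below_perturb; [exact HBlow | apply (lo_mono _ (s - m)); [lia | exact HE2]]. }
destruct (bounded_below_nonzero _ _ Hden) as [N0 HN0].
apply (loi_eventually_ext _ _ m N0 (lo_div_bounded_below _ _ _ _ Hnum Hden)).
intros n Hn. specialize (HN0 n Hn).
assert (HBn : B n <> 0) by (intro H0; apply HN0; rewrite H0; ring).
assert (HBEn : B n + E2 n <> 0) by (intro H0; apply HN0; rewrite H0; ring).
field. split; assumption.
Qed.

Lemma sum_range_succ m n F : (m <= S n)%nat -> sum_range m (S n) F = sum_range m n F + F (S n).
Proof.
intros H. unfold sum_range.
replace (S (S n) - m)%nat with (S (S n - m)) by lia.
rewrite seq_S. replace (m + (S n - m))%nat with (S n) by lia.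
rewrite map_app, fold_right_app. cbn [map fold_right].
generalize (map F (seq m (S n - m))). intros l.
induction l as [|y l IH]; cbn [fold_right]; [ring | rewrite IH; ring].
Qed.

Lemma expansion_of_recurrence (x b : R) (r q : nat -> R) (e : nat) :
  x <> 0 -> b <> 0 -> (forall t, r (S t) = x * r t - q t * b) ->
  forall t, r 0%nat / (x ^ e * b) =
    sum_range (S e) (e + t) (fun i => q (i - S e)%nat / x ^ i) + r t / (x ^ (e + t) * b).
Proof.
intros Hx Hb Hr t. assert (x ^ e <> 0) by (apply pow_nonzero; exact Hx).
induction t as [|t IH].
- unfold sum_range. rewrite Nat.add_0_r, Nat.sub_diag. simpl. field. split; assumption.
- rewrite IH, Nat.add_succ_r, sum_range_succ by lia.
  replace (S (e + t) - S e)%nat with t by lia.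
  rewrite Hr. simpl. assert (x ^ (e + t) <> 0) by (apply pow_nonzero; exact Hx).
  field. repeat split; assumption.
Qed.

Module Poly.
Import zify all_boot all_order all_algebra ring lra.
Import Order.TTheory GRing.Theory Num.Theory.
Local Open Scope ring_scope.

Lemma size_drop_top {R : nzRingType} {p : {poly R}} {d : nat} :
  (size p <= d.+1)%N -> (size (p - p`_d *: 'X^d)%R <= d)%N.
Proof.
move=> hs; apply/leq_sizeP => j hj; rewrite coefB coefZ coefXn.
case: (ltngtP j d) => [hjd | hjd | ->].
- by move: hj; rewrite leqNgt hjd.
- by rewrite (leq_sizeP _ _ hs j hjd) mulr0 subrr.
- by rewrite mulr1 subrr.
Qed.

Lemma size_coef_mul_top {R : nzRingType} {U V : {poly R}} {a b : nat} :
  (size U <= a.+1)%N -> (size V <= b.+1)%N ->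
  (size (U * V)%R <= (a + b).+1)%N /\ (U * V)`_(a + b) = U`_a * V`_b.
Proof.
move=> hU hV; split; first by have := size_polyMleq U V; lia.
have ha : (a < (a + b).+1)%N by rewrite ltnS leq_addr.
rewrite coefM (bigD1 (Ordinal ha)) //= addKn big1 ?addr0 // => -[j hj] /= hne.
have {hne} hja : j != a by apply: contra hne => /eqP hja; apply/eqP/val_inj.
case: (ltngtP j a) hja => [hlt _ | hgt _ | _ //].
- by rewrite (leq_sizeP _ _ hV) ?mulr0 //; move: hj; rewrite ltnS; lia.
- by rewrite (leq_sizeP _ _ hU) ?mul0r.
Qed.

Section Difference.
Context {R : comNzRingType}.
Implicit Types p q : {poly R}.

Definition shift p := p \Po ('X + 1).
Definition diff p := shift p - p.

Lemma shift_eval p x : (shift p).[x] = p.[x + 1].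
Proof. by rewrite horner_comp hornerD hornerX hornerC. Qed.

Lemma diffD p q : diff (p + q) = diff p + diff q.
Proof. rewrite /diff /shift comp_polyD; ring. Qed.

Lemma diffZ c p : diff (c *: p) = c *: diff p.
Proof. by rewrite /diff /shift comp_polyZ scalerBr. Qed.

Lemma diff_Xn i : (size (diff 'X^i) <= i)%N /\ (diff 'X^i)`_i.-1 = i%:R.
Proof.
rewrite /diff /shift comp_Xn_poly.
elim: i => [|i [IHs IHc]]; first by rewrite expr0 subrr size_poly0 coef0.
set A := ('X + 1) ^+ i - 'X^i in IHs IHc *.
have -> : ('X + 1) ^+ i.+1 - 'X^(i.+1) = 'X * A + A + 'X^i by rewrite /A !exprS; ring.
clearbody A; have hA := leq_sizeP _ _ IHs; split.
  apply/leq_sizeP => -[|j] hj //.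
  rewrite !coefD coefXM coefXn /= (hA j) // (hA j.+1) ?(ltnW hj) // (gtn_eqF hj).
  by rewrite !add0r.
rewrite !coefD coefXM coefXn /= eqxx (hA i) // addr0.
by case: i IHc {IHs hA} => [|i] /= IHc; rewrite ?add0r // IHc natr1.
Qed.

Lemma diff_size {d : nat} {p} :
  (size p <= d.+1)%N -> (size (diff p) <= d)%N /\ (diff p)`_d.-1 = d%:R * p`_d.
Proof.
elim: d p => [|d IH] p hs.
  have := size_drop_top hs; rewrite leqn0 size_poly_eq0 subr_eq0 => /eqP ->.
  rewrite diffZ /diff /shift comp_Xn_poly !expr0 subrr scaler0.
  by rewrite size_poly0 coef0 mul0r.
have hq := size_drop_top hs.
have -> : p = (p - p`_d.+1 *: 'X^(d.+1)) + p`_d.+1 *: 'X^(d.+1) by rewrite subrK.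
move: (p - _) hq => q hq.
have [hXs hXc] := diff_Xn d.+1; have [hqs _] := IH q hq.
rewrite diffD diffZ; split.
  apply/leq_sizeP => j hj; rewrite coefD coefZ (leq_sizeP _ _ hqs) ?(leq_trans _ hj) //.
  by rewrite (leq_sizeP _ _ hXs) // mulr0 addr0.
rewrite /= in hXc; rewrite [LHS]coefD [in RHS]coefD !coefZ (leq_sizeP _ _ hqs) // hXc.
by rewrite coefXn eqxx (leq_sizeP _ _ hq) // !add0r mulr1 mulrC.
Qed.

Lemma shift_size {d : nat} {p} :
  (size p <= d.+1)%N -> (size (shift p) <= d.+1)%N /\ (shift p)`_d = p`_d.
Proof.
move=> hs; have [hds _] := diff_size hs.
have -> : shift p = p + diff p by rewrite /diff addrC subrK.
split; last by rewrite coefD (leq_sizeP _ _ hds) // addr0.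
apply/leq_sizeP => j hj.
by rewrite coefD (leq_sizeP _ _ hs) // (leq_sizeP _ _ hds) ?addr0 // ltnW.
Qed.

(* Polynomial counterparts of (Lhat g)(n) and of the denominator g(n+1)^2. *)
Definition Lpoly p := shift p ^+ 2 - p * shift (shift p).
Definition Bpoly p := shift p ^+ 2.

Lemma Lpoly_eval p x : (Lpoly p).[x] = p.[x + 1] ^+ 2 - p.[x] * p.[x + 1 + 1].
Proof. by rewrite /Lpoly !hornerE !shift_eval. Qed.

Lemma Bpoly_eval p x : (Bpoly p).[x] = p.[x + 1] ^+ 2.
Proof. by rewrite /Bpoly hornerE shift_eval. Qed.

(* Written with differences, the top terms of Lpoly p are visible. *)
Lemma Lpoly_diff p : Lpoly p = diff p ^+ 2 - p * diff (diff p).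
Proof. rewrite /Lpoly /diff /shift !comp_polyB; ring. Qed.

(* A polynomial of degree d >= 2 is sent by Lpoly to one of degree 2d - 2 with
   top coefficient d p_d^2 (the terms of degree 2d cancel). *)
Lemma Lpoly_size {d : nat} {p} : (2 <= d)%N -> (size p <= d.+1)%N ->
  (size (Lpoly p) <= (2 * d - 2).+1)%N /\ (Lpoly p)`_(2 * d - 2) = d%:R * p`_d ^+ 2.
Proof.
case: d => [|[|e]] // _ hs.
have [h1 c1] := diff_size hs; have [h2 c2] := diff_size h1.
have [s3 c3] := size_coef_mul_top h1 h1; have [s4 c4] := size_coef_mul_top hs h2.
rewrite /= in c1 c2 s4 c4.
have -> : (2 * e.+2 - 2 = e.+1 + e.+1)%N by lia.
have E : (e.+1 + e.+1 = e.+2 + e)%N by lia.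
rewrite Lpoly_diff expr2; split.
  apply/leq_sizeP => j hj.
  by rewrite coefB (leq_sizeP _ _ s3) // (leq_sizeP _ _ s4) ?subrr // -E.
rewrite coefB c3 E c4 c2 !c1 -(natr1 e.+1); ring.
Qed.

Lemma Bpoly_size {d : nat} {p} : (size p <= d.+1)%N ->
  (size (Bpoly p) <= (2 * d).+1)%N /\ (Bpoly p)`_(2 * d) = p`_d ^+ 2.
Proof.
move=> hs; have [s1 c1] := shift_size hs; have [s2 c2] := size_coef_mul_top s1 s1.
by rewrite /Bpoly expr2 mul2n -addnn c2 c1 s2.
Qed.

(* Wpoly d p = d B - X^2 L, so that (B - L)/B = 1 - d/x^2 + W/(x^2 B); the
   top coefficients of d B and X^2 L agree, so deg W < 2d = deg B. *)
Definition Wpoly d p := d%:R *: Bpoly p - 'X^2 * Lpoly p.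

Lemma Wpoly_size d p : (2 <= d)%N -> (size p <= d.+1)%N -> (size (Wpoly d p) <= 2 * d)%N.
Proof.
move=> hd hs; have [ls lc] := Lpoly_size hd hs; have [bs bc] := Bpoly_size hs.
apply/leq_sizeP => j hj; rewrite /Wpoly coefB coefZ coefXnM.
case: (ltngtP j (2 * d)) => [hj2 | hj2 | ->].
- by move: hj; rewrite leqNgt hj2.
- rewrite (leq_sizeP _ _ bs j hj2) mulr0 ifF; last by apply/negbTE; rewrite -leqNgt; lia.
  by rewrite (leq_sizeP _ _ ls) ?subrr //; lia.
- rewrite ifF; last by apply/negbTE; rewrite -leqNgt; lia.
  by rewrite lc bc mulrC subrr.
Qed.
End Difference.

(* Long division of W by B in powers of 1/X, one step at a time: r(0) = W and
   r(t+1) = X r(t) - q(t) B, where q(t) kills the coefficient of X^(s-1). *)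
Section LongDivision.
Context {F : fieldType}.
Variables (B : {poly F}) (s : nat).

Fixpoint ldiv_rem (W : {poly F}) (t : nat) : {poly F} :=
  if t is t'.+1
  then 'X * ldiv_rem W t' - ((ldiv_rem W t')`_s.-1 / B`_s) *: B
  else W.

Definition ldiv_coef (W : {poly F}) (t : nat) : F := (ldiv_rem W t)`_s.-1 / B`_s.

Lemma ldiv_rem_succ W t : ldiv_rem W t.+1 = 'X * ldiv_rem W t - ldiv_coef W t *: B.
Proof. by []. Qed.

Lemma ldiv_rem_size (W : {poly F}) (t : nat) :
  (size B <= s.+1)%N -> B`_s != 0 -> (size W <= s)%N -> (size (ldiv_rem W t) <= s)%N.
Proof.
move=> hB hBs hW; elim: t => [|t IH] //=.
have hr := leq_sizeP _ _ IH.
apply/leq_sizeP => j hj; rewrite coefB coefZ coefXM.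
case: (ltngtP j s) => [hjs | hjs | ->].
- by move: hj; rewrite leqNgt hjs.
- rewrite (leq_sizeP _ _ hB j hjs) mulr0 subr0.
  by case: eqP => // _; apply: hr; lia.
- rewrite divfK //; case: eqP => [s0 | _]; last by rewrite subrr.
  by rewrite hr ?s0 ?subrr.
Qed.
End LongDivision.

Section Bounds.
Context {R : realFieldType}.
Implicit Types p q : {poly R}.

Lemma poly_upper_bound {p d x} : (size p <= d.+1)%N -> 1 <= x ->
  `|p.[x]| <= (\sum_(i < d.+1) `|p`_i|) * x ^+ d.
Proof.
move=> hs hx; rewrite (horner_coef_wide x hs) mulr_suml.
apply: le_trans (ler_norm_sum _ _ _) _; apply: ler_sum => i _.
rewrite normrM normrX (ger0_norm (le_trans ler01 hx)).
by apply: ler_wpM2l; [exact: normr_ge0 | apply: ler_weXn2l; rewrite // -ltnS].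
Qed.

Lemma poly_lower_bound {p d} : (size p <= d.+1)%N -> p`_d != 0 ->
  exists M, forall x, M <= x -> `|p`_d| / 2 * x ^+ d <= `|p.[x]|.
Proof.
move=> hs hc; have c0 : 0 < `|p`_d| by rewrite normr_gt0.
have hq := size_drop_top hs.
have hp x : p.[x] = p`_d * x ^+ d + (p - p`_d *: 'X^d).[x].
  by rewrite hornerD hornerN hornerZ hornerXn addrC subrK.
move: (p - _) hq hp => q hq hp.
case: d hs hc c0 hq hp => [|d] _ _ c0 hq hp.
  move: hq; rewrite leqn0 size_poly_eq0 => /eqP q0.
  exists 0 => x _; rewrite hp q0 horner0 addr0 expr0 mulr1 normrM normr1 mulr1.
  lra.
set K := \sum_(i < d.+1) `|q`_i|.
exists (Num.max 1 (2 * K / `|p`_d.+1|)) => x; rewrite ge_max => /andP[x1 xK].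
have hqx := poly_upper_bound hq x1; rewrite -/K in hqx.
have hK : 2 * K <= x * `|p`_d.+1| by rewrite -ler_pdivrMr.
have htri : `|p`_d.+1 * x ^+ d.+1| <= `|p.[x]| + `|q.[x]|.
  by rewrite (_ : _ * _ = p.[x] - q.[x]) ?ler_normB // hp addrK.
rewrite normrM normrX (ger0_norm (le_trans ler01 x1)) exprS in htri *.
have hxd : 0 <= x ^+ d := exprn_ge0 _ (le_trans ler01 x1).
nra.
Qed.
End Bounds.

Section RealPolynomials.
Implicit Types p q : {poly R}.

Definition peval p (x : R) : R := p.[x].
Definition deg_le p (d : nat) : Prop := (size p <= d.+1)%N.
Definition has_degree p (d : nat) : Prop := size p = d.+1.

Lemma has_degree_le {p d} : has_degree p d -> deg_le p d.
Proof. by rewrite /has_degree /deg_le => ->. Qed.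

Lemma has_degree_coef {p d} : has_degree p d -> p`_d != 0.
Proof.
by move=> hp; rewrite -[d]/(d.+1.-1) -hp -lead_coefE lead_coef_eq0 -size_poly_gt0 hp.
Qed.

Lemma has_degreeP p d : (size p <= d.+1)%N -> p`_d != 0 -> has_degree p d.
Proof.
by move=> hs hc; apply/eqP; rewrite eqn_leq hs ltnNge; apply: contra hc => /leq_sizeP->.
Qed.

(* From here on, statements use the Stdlib operations on reals and naturals
   (hence Nat.mul and %coq_nat), so that they apply verbatim outside Poly. *)
Local Open Scope R_scope.

Lemma peval_Lpoly p x :
  peval (Lpoly p) x = peval p (x + 1) ^ 2 - peval p x * peval p (x + 1 + 1).
Proof. by rewrite /peval Lpoly_eval RpowE. Qed.

Lemma peval_Bpoly p x : peval (Bpoly p) x = peval p (x + 1) ^ 2.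
Proof. by rewrite /peval Bpoly_eval RpowE. Qed.

(* Exact degrees of Lpoly p and Bpoly p; over the reals d p_d^2 <> 0. *)
Lemma Lpoly_degree p d : (2 <= d)%coq_nat -> has_degree p d ->
  has_degree (Lpoly p) (Nat.mul 2 d - 2)%coq_nat.
Proof.
move=> /ssrnat.leP hd hp; rewrite multE minusE.
have [hs hc] := Lpoly_size hd (has_degree_le hp).
apply: has_degreeP => //; rewrite hc mulf_neq0 ?expf_neq0 ?has_degree_coef //.
by rewrite pnatr_eq0 -lt0n (leq_trans _ hd).
Qed.

Lemma Bpoly_degree p d : has_degree p d -> has_degree (Bpoly p) (Nat.mul 2 d).
Proof.
move=> hp; rewrite multE; have [hs hc] := Bpoly_size (has_degree_le hp).
by apply: has_degreeP => //; rewrite hc expf_neq0 ?has_degree_coef.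
Qed.

Lemma peval_bigO p d : deg_le p d -> bigO (fun n => peval p (INR n)) d.
Proof.
move=> hp; exists (\sum_(i < d.+1) `|p`_i|)%R, 1%N; split.
  by apply/RleP; apply: sumr_ge0 => i _; apply: normr_ge0.
move=> n /ssrnat.leP hn; rewrite RpowE; apply/RleP; apply: poly_upper_bound hp _.
by apply/RleP; apply: INR_ge1; apply/ssrnat.leP.
Qed.

Lemma peval_bounded_below p d :
  has_degree p d -> bounded_below (fun n => peval p (INR n)) d.
Proof.
move=> hp; have [M hM] := poly_lower_bound (has_degree_le hp) (has_degree_coef hp).
have [N hN] := exists_nat_ge M.
exists (`|p`_d| / 2)%R, N; split.
  by apply/RltP; rewrite divr_gt0 // normr_gt0 has_degree_coef.
move=> n /ssrnat.leP hn; rewrite RpowE; apply/RleP; apply: hM; apply/RleP.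
by apply: Rle_trans hN (le_INR _ _ _); apply/ssrnat.leP.
Qed.

Definition poly_of_coefs (a : nat -> R) (s : list nat) : {poly R} :=
  \sum_(k <- s) a k *: 'X^k.

Lemma peval_poly_of_coefs a s x :
  peval (poly_of_coefs a s) x = List.fold_right Rplus 0 (List.map (fun k => a k * x ^ k) s).
Proof.
rewrite /peval /poly_of_coefs; elim: s => [|k s IH] /=; first by rewrite big_nil horner0.
by rewrite big_cons hornerD hornerZ hornerXn IH RpowE.
Qed.

Lemma poly_of_coefs_size a s l : (forall k, List.In k s -> (k < l)%coq_nat) ->
  (size (poly_of_coefs a s) <= l)%N.
Proof.
rewrite /poly_of_coefs; elim: s => [|k s IH] hs; first by rewrite big_nil size_poly0.
rewrite big_cons (leq_trans (size_polyD _ _)) // geq_max.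
rewrite (leq_trans (size_scale_leq _ _)) ?size_polyXn;
  last by apply/ssrnat.ltP; apply: hs; left.
by apply: IH => k' hk'; apply: hs; right.
Qed.

Lemma poly_of_coefs_degree a m l : (m <= l)%coq_nat -> a l <> 0 ->
  has_degree (poly_of_coefs a (List.seq m (S l - m)%coq_nat)) l.
Proof.
move=> hml /eqP hal.
have e1 : (S l - m)%coq_nat = S (l - m)%coq_nat by lia.
have e2 : (m + (l - m))%coq_nat = l by lia.
rewrite e1 List.seq_S e2.
rewrite /has_degree /poly_of_coefs big_cat big_seq1 /= addrC.
rewrite size_polyDl size_scale ?size_polyXn //.
by rewrite ltnS; apply: poly_of_coefs_size => k /List.in_seq; lia.
Qed.

Definition asym_rem p d t := ldiv_rem (Bpoly p) (2 * d) (Wpoly d p) t.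
Definition asym_coef p d t := ldiv_coef (Bpoly p) (2 * d) (Wpoly d p) t.

Lemma asym_rem_degree p d t : (2 <= d)%coq_nat -> has_degree p d ->
  deg_le (asym_rem p d t) (Nat.mul 2 d - 1)%coq_nat.
Proof.
move=> /ssrnat.leP hd hp; have hs := has_degree_le hp.
have [hBs hBc] := Bpoly_size hs.
rewrite /deg_le multE minusE (_ : (2 * d - 1).+1 = 2 * d)%N; last by lia.
apply: ldiv_rem_size => //; last exact: Wpoly_size.
by rewrite hBc expf_neq0 ?has_degree_coef.
Qed.

Lemma peval_asym_rem0 p d x :
  peval (asym_rem p d 0) x = INR d * peval (Bpoly p) x - x ^ 2 * peval (Lpoly p) x.
Proof.
by rewrite RpowE INRE /peval /asym_rem /= /Wpoly hornerD hornerN hornerZ !hornerM hornerX.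
Qed.

Lemma peval_asym_rem_succ p d t x : peval (asym_rem p d (S t)) x =
  x * peval (asym_rem p d t) x - asym_coef p d t * peval (Bpoly p) x.
Proof.
by rewrite /peval /asym_rem ldiv_rem_succ hornerD hornerN hornerM hornerZ hornerX.
Qed.
End RealPolynomials.
End Poly.

Lemma shifted_product_errors g p d k e : (k <= d)%nat -> Poly.deg_le p d ->
  (forall n, g n = Poly.peval p (INR n) + e n) -> little_o_pow e k ->
  little_o_pow (fun n => g (S n) ^ 2 - Poly.peval (Poly.Bpoly p) (INR n)) (d + k) /\
  little_o_pow (fun n => g n * g (S (S n))
                         - Poly.peval p (INR n) * Poly.peval p (INR (S (S n)))) (d + k).
Proof.
intros Hkd Hp Hg He.
pose proof (Poly.peval_bigO p d Hp) as O0.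
pose proof (bigO_shift _ _ O0) as O1. pose proof (bigO_shift _ _ O1) as O2.
pose proof (lo_shift _ _ He) as He1. pose proof (lo_shift _ _ He1) as He2.
split; eapply lo_ext.
2: exact (product_perturbation _ _ _ _ d k Hkd O1 O1 He1 He1).
3: exact (product_perturbation _ _ _ _ d k Hkd O0 O2 He He2).
- intros n. cbv beta. rewrite Hg, Poly.peval_Bpoly, <- S_INR. ring.
- intros n. cbv beta. rewrite !Hg. reflexivity.
Qed.

Lemma Lhat_perturbation g p d k e : (k <= d)%nat -> Poly.deg_le p d ->
  (forall n, g n = Poly.peval p (INR n) + e n) -> little_o_pow e k ->
  little_o_pow (fun n => Lhat g n - Poly.peval (Poly.Lpoly p) (INR n)) (d + k).
Proof.
intros Hkd Hp Hg He.
destruct (shifted_product_errors g p d k e Hkd Hp Hg He) as [H1 H2].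
eapply lo_ext; [|exact (lo_add _ _ _ H1 (lo_opp _ _ H2))].
intros n. cbv beta. unfold Lhat.
rewrite Poly.peval_Lpoly, Poly.peval_Bpoly, <- !S_INR. ring.
Qed.

Lemma Lhat_iter_approximation l r a f : (1 <= r)%nat -> (2 * r <= l)%nat -> a l <> 0 ->
  little_o_pow (fun n => f n - sum_range (l - 2 * r) l (fun k => a k * INR n ^ k)) (l - 2 * r) ->
  forall i, (i < r)%nat -> exists p d k,
    (k + 2 * (r - i) = d)%nat /\ Poly.has_degree p d /\
    INR d = 2 ^ i * INR l - 2 ^ S i + 2 /\
    little_o_pow (fun n => Lhat_iter i f n - Poly.peval p (INR n)) k.
Proof.
intros Hr Hl Ha Hf. induction i as [|i IH]; intros Hi.
- exists (Poly.poly_of_coefs a (seq (l - 2 * r) (S l - (l - 2 * r)))), l, (l - 2 * r)%nat.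
  split; [lia|]. split; [apply Poly.poly_of_coefs_degree; [lia | exact Ha]|].
  split; [simpl; ring|].
  eapply lo_ext; [|exact Hf]. intros n. cbv beta.
  rewrite Poly.peval_poly_of_coefs. reflexivity.
- destruct (IH ltac:(lia)) as [p [d [k [Hkd [Hp [Hdl He]]]]]].
  exists (Poly.Lpoly p), (2 * d - 2)%nat, (d + k)%nat.
  split; [lia|]. split; [apply Poly.Lpoly_degree; [lia | exact Hp]|]. split.
  { rewrite minus_INR, mult_INR, Hdl by lia. simpl. ring. }
  apply (Lhat_perturbation (Lhat_iter i f) p d k
           (fun n => Lhat_iter i f n - Poly.peval p (INR n)));
    [lia | apply Poly.has_degree_le, Hp | intros n; ring | exact He].
Qed.

Lemma polynomial_ratio_expansion p d m x :
  (2 <= m)%nat -> x <> 0 -> Poly.peval (Poly.Bpoly p) x <> 0 ->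
  Poly.peval p x * Poly.peval p (x + 1 + 1) / Poly.peval (Poly.Bpoly p) x =
  1 + - INR d / x ^ 2 + sum_range 3 m (fun i => Poly.asym_coef p d (i - 3) / x ^ i)
  + Poly.peval (Poly.asym_rem p d (m - 2)) x / (x ^ m * Poly.peval (Poly.Bpoly p) x).
Proof.
intros Hm Hx HB.
pose proof (expansion_of_recurrence x _ (fun t => Poly.peval (Poly.asym_rem p d t) x)
  (Poly.asym_coef p d) 2 Hx HB (fun t => Poly.peval_asym_rem_succ p d t x) (m - 2)) as Hexp.
replace (2 + (m - 2))%nat with m in Hexp by lia.
rewrite Poly.peval_asym_rem0, Poly.peval_Lpoly, <- Poly.peval_Bpoly in Hexp.
rewrite (Rplus_assoc (1 + - INR d / x ^ 2)), <- Hexp.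
field. split; assumption.
Qed.

Lemma R2_expansion g p d k m e : (2 <= m)%nat -> (k + m = d)%nat -> Poly.has_degree p d ->
  (forall n, g n = Poly.peval p (INR n) + e n) -> little_o_pow e k ->
  little_o_invpow (fun n => R2 g n - (1 + - INR d / INR n ^ 2
    + sum_range 3 m (fun i => Poly.asym_coef p d (i - 3) / INR n ^ i))) m.
Proof.
intros Hm Hkm Hp Hg He.
set (B := fun n => Poly.peval (Poly.Bpoly p) (INR n)).
set (A := fun n => Poly.peval p (INR n) * Poly.peval p (INR (S (S n)))).
set (rem := fun n => Poly.peval (Poly.asym_rem p d (m - 2)) (INR n)).
pose proof (Poly.has_degree_le Hp) as Hpd.
pose proof (Poly.Bpoly_degree p d Hp) as HBd.
destruct (shifted_product_errors g p d k e ltac:(lia) Hpd Hg He) as [HE2 HE1].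
replace (d + k)%nat with (2 * d - m)%nat in HE1, HE2 by lia.
assert (HBlow : bounded_below B (2 * d)) by exact (Poly.peval_bounded_below _ _ HBd).
(* R^2 g is A/B with numerator and denominator perturbed by o(n^(2d - m)) *)
assert (Hratio : little_o_invpow (fun n => (A n + (g n * g (S (S n)) - A n))
  / (B n + (g (S n) ^ 2 - B n)) - A n / B n) m).
{ apply (ratio_perturbation _ _ _ _ (2 * d) m); [lia | | | exact HBlow | exact HE1 | exact HE2].
  - replace (2 * d)%nat with (d + d)%nat by lia.
    pose proof (Poly.peval_bigO _ _ Hpd) as O0.
    exact (bigO_mul _ _ _ _ O0 (bigO_shift _ _ (bigO_shift _ _ O0))).
  - exact (Poly.peval_bigO _ _ (Poly.has_degree_le HBd)). }
(* the remainder of the long division is O(n^(2d-1)) over a denominator of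
   order n^(m+2d) *)
assert (Hrem : little_o_invpow (fun n => rem n / (INR n ^ m * B n)) m).
{ apply lo_div_bounded_below with (q := (2 * d)%nat).
  - replace (2 * d)%nat with (S (2 * d - 1)) by lia.
    apply bigO_lo_succ, Poly.peval_bigO, Poly.asym_rem_degree; [lia | exact Hp].
  - replace (2 * d + m)%nat with (m + 2 * d)%nat by lia.
    exact (bounded_below_mul _ _ _ _ (bounded_below_pow m) HBlow). }
destruct (bounded_below_nonzero _ _ HBlow) as [N HN].
apply (loi_eventually_ext _ _ m (Nat.max N 1) (loi_add _ _ m Hratio Hrem)).
intros n Hn. specialize (HN n ltac:(lia)).
assert (Hx : INR n <> 0) by (pose proof (INR_ge1 n ltac:(lia)); lra).
pose proof (polynomial_ratio_expansion p d m (INR n) Hm Hx HN) as Hexp.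
rewrite <- !S_INR in Hexp. fold (A n) (B n) (rem n) in Hexp.
rewrite Hexp. unfold R2.
replace (A n + (g n * g (S (S n)) - A n)) with (g n * g (S (S n))) by ring.
replace (B n + (g (S n) ^ 2 - B n)) with (g (S n) ^ 2) by ring.
ring.
Qed.

Theorem theorem4p5 (l r : nat) (a : nat -> R) (f : nat -> R) :
  (1 <= r)%nat -> (2 * r <= l)%nat -> a l <> 0 ->
  little_o_pow
    (fun n => f n - sum_range (l - 2 * r) l (fun k => a k * INR n ^ k))
    (l - 2 * r) ->
  forall j : nat, (1 <= j <= r)%nat ->
    exists z : nat -> R,
      little_o_invpow
        (fun n => R2 (Lhat_iter (j - 1) f) n
                  - (1 + (2 ^ j - 2 ^ (j - 1) * INR l - 2) / INR n ^ 2
                     + sum_range 3 (2 * (r - j + 1)) (fun i => z i / INR n ^ i)))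
        (2 * (r - j + 1)).
Proof.
intros Hr Hl Ha Hf j Hj.
destruct (Lhat_iter_approximation l r a f Hr Hl Ha Hf (j - 1) ltac:(lia))
  as [p [d [k [Hkd [Hp [Hdl He]]]]]].
exists (fun i => Poly.asym_coef p d (i - 3)).
assert (Hcoef : 2 ^ j - 2 ^ (j - 1) * INR l - 2 = - INR d).
{ rewrite Hdl. replace (S (j - 1)) with j by lia. ring. }
rewrite Hcoef.
apply (R2_expansion _ p d k _ (fun n => Lhat_iter (j - 1) f n - Poly.peval p (INR n)));
  [lia | lia | exact Hp | intros n; ring | exact He].
Qed.
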